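(* Consider the one-state softmax setting in the context, with the update $\theta_{t+1} = \theta_t + \eta_t(\hat r_t - \hat b_t)$ and on-policy sampling $a_t\sim\pi_{\theta_t}(\cdot)$. (1) If $\hat r_t(a) = \frac{\mathbb{I}\{a_t = a\}}{\pi_{\theta_t}(a)} r(a)$ (true mean reward observed) and $\eta_t = \eta > 0$ is constant, then for all $t\ge1$: $\pi_{\theta_{t+1}}^\top r - \pi_{\theta_t}^\top r \ge 0$ almost surely, and $$\mathbb{E}_t[\pi_{\theta_{t+1}}^\top r] - \pi_{\theta_t}^\top r \ge \frac{\eta}{1+\eta}\,\pi_{\theta_t}(a^* )\left(r(a^* ) - \pi_{\theta_t}^\top r\right)^2,$$ where $\mathbb{E}_t$ is over the sampling of $a_t\sim\pi_{\theta_t}(\cdot)$. (2) If $\hat r_t(a) = \frac{\mathbb{I}\{a_t = a\}}{\pi_{\theta_t}(a)} x_t(a)$ (sampled reward observed) and $\eta_t = \frac{\pi_{\theta_t}(a_t)\,|r(a_t) - \pi_{\theta_t}^\top r|}{8R_{\max}^2}$, then for all $t\ge 1$, $$\mathbb{E}_t[\pi_{\theta_{t+1}}^\top r] - \pi_{\theta_t}^\top r \ge \frac{1}{16 R_{\max}^2}\sum_{i=1}^K \pi_{\theta_t}(i)^2\left|r(i) - \pi_{\theta_t}^\top r\right|^3 \ge \frac{1}{16R_{\max}^2}\cdot\frac{\Delta}{K-1}\cdot\pi_{\theta_t}(a^* )^2\left(r(a^* ) - \pi_{\theta_t}^\top r\right)^2,$$ where $\mathbb{E}_t$ is over the sampling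 of $a_t\sim\pi_{\theta_t}(\cdot)$ and of the reward $x_t(a_t)\sim R_{a_t}$ given $\theta_t$.
   Context: Let $K\ge 2$, $r\in[0,1]^K$, $a^*\in\arg\max_a r(a)$, $\Delta := r(a^* ) - \max_{a\ne a^*} r(a)$. Softmax policy $\pi_\theta(a) = e^{\theta(a)}/\sum_{a'}e^{\theta(a')}$. For each action $a$, $R_a$ is a reward distribution supported on $[-R_{\max},R_{\max}]$ ($R_{\max}>0$) with mean $r(a)$. At iteration $t$, $a_t\sim\pi_{\theta_t}(\cdot)$ is sampled; in the sampled-reward case a reward $x_t(a_t)\sim R_{a_t}$ is observed and $x_t(a) := 0$ for $a\ne a_t$. The baseline vector is $\hat b_t(a) = \left(\frac{\mathbb{I}\{a_t=a\}}{\pi_{\theta_t}(a)} - 1\right)\pi_{\theta_t}^\top r$. *)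

From HB Require Import structures.
From mathcomp Require Import all_boot all_order all_algebra.
From mathcomp Require Import all_classical all_reals all_analysis.
Set Implicit Arguments. Unset Strict Implicit. Unset Printing Implicit Defensive.
Import Order.TTheory GRing.Theory Num.Theory.
Local Open Scope ring_scope.

Section Softmax.
Variables (R : realType) (K : nat).

Definition softmax (th : 'I_K -> R) (a : 'I_K) : R :=
  expR (th a) / \sum_(a' < K) expR (th a').

Definition pr (th : 'I_K -> R) (r : 'I_K -> R) : R :=
  \sum_(a < K) softmax th a * r a.

Definition ind (s a : 'I_K) : R := if s == a then 1 else 0.

Definition baseline (th : 'I_K -> R) (r : 'I_K -> R) (s a : 'I_K) : R :=
  (ind s a / softmax th a - 1) * pr th r.

Definition iw (th : 'I_K -> R) (s : 'I_K) (y : 'I_K -> R) (a : 'I_K) : R :=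
  ind s a / softmax th a * y a.

Definition upd (th : 'I_K -> R) (eta : R) (rhat bhat : 'I_K -> R) : 'I_K -> R :=
  fun a => th a + eta * (rhat a - bhat a).

Definition upd_mean (th r : 'I_K -> R) (eta : R) (s : 'I_K) : 'I_K -> R :=
  upd th eta (iw th s r) (baseline th r s).

Definition xvec (s : 'I_K) (x : R) : 'I_K -> R := fun a => if a == s then x else 0.

Definition eta_adapt (th r : 'I_K -> R) (Rmax : R) (s : 'I_K) : R :=
  softmax th s * `|r s - pr th r| / (8 * Rmax ^+ 2).

Definition upd_sampled (th r : 'I_K -> R) (Rmax : R) (s : 'I_K) (x : R) : 'I_K -> R :=
  upd th (eta_adapt th r Rmax s) (iw th s (xvec s x)) (baseline th r s).

(* reward gap Delta = r(astar) - max_{a <> astar} r(a)  (the max is seeded with 0,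
   harmless since r >= 0 and K >= 2 makes the index set nonempty) *)
Definition gap (r : 'I_K -> R) (astar : 'I_K) : R :=
  r astar - \big[Num.max/(0 : R)]_(a < K | a != astar) r a.

End Softmax.

From HB Require Import structures.
From mathcomp Require Import all_boot all_order all_algebra.
From mathcomp Require Import all_classical all_reals all_analysis.
From mathcomp.algebra_tactics Require Import ring lra.
Import Order.TTheory GRing.Theory Num.Theory.
Import numFieldNormedType.Exports.

Set Implicit Arguments.
Unset Strict Implicit.
Unset Printing Implicit Defensive.

Local Open Scope ring_scope.

(* Both updates add a constant to every coordinate, which softmax ignores, plus
   some c to the sampled coordinate s only; such a move changes the expected
   reward by exactly [boost_gain p c d] = p (e^c - 1) d / (1 + p (e^c - 1)), with
   p = pi(s) and d = r(s) - pi^T r.  With the true mean reward, c = eta d / p has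
   the sign of d, and e^c >= 1 + c bounds the gain at a*.  With sampled rewards
   the adaptive step keeps |c| <= 1/4, where the gain is an affine function of
   the observed reward x up to a quadratic error; averaging x against R_s gives
   p |d|^3 / (16 Rmax^2).  Finally every other action lies at least Delta below
   a*.  Hence either d >= Delta at a*, or all other actions have deviations of
   size >= Delta - d whose pi-weighted sum is at least pi(astar) d (deviations
   average to zero), and Cauchy-Schwarz over the K - 1 other actions concludes. *)

Section BoostGain.
Variable R : realType.
Implicit Types p c d t : R.

Definition boost_gain p c d : R := p * (expR c - 1) * d / (1 + p * (expR c - 1)).

Lemma boost_den_gt0 p c : 0 <= p <= 1 -> 0 < 1 + p * (expR c - 1).
Proof.
case/andP=> p0 p1; have ec := expR_gt0 c.
have : 0 <= p * expR c by rewrite mulr_ge0 // ltW.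
nra.
Qed.

Lemma boost_gain_ge0 p c d : 0 <= p <= 1 -> 0 <= c * d -> 0 <= boost_gain p c d.
Proof.
move=> hp cd; have Z := boost_den_gt0 c hp; case/andP: hp => p0 _.
rewrite /boost_gain divr_ge0 ?(ltW Z) // -mulrA mulr_ge0 //.
have [c0|c0|->] := ltrgtP c 0; last by rewrite expR0 subrr mul0r.
- by rewrite nmulr_rge0 ?subr_lt0 ?expR_lt1 // -(nmulr_rge0 _ c0).
- rewrite pmulr_rge0; first by rewrite -(pmulr_rge0 _ c0).
  by rewrite subr_gt0 (lt_le_trans _ (expR_ge1Dx c)) // ltrDl.
Qed.

Lemma boost_gain_ge_scaled p eta d : 0 < p <= 1 -> 0 < eta -> 0 <= d <= 1 ->
  eta / (1 + eta) * d ^+ 2 <= boost_gain p (eta * d / p) d.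
Proof.
move=> /andP[p0 p1] eta0 /andP[d0 d1].
have Z : 0 < 1 + p * (expR (eta * d / p) - 1) by rewrite boost_den_gt0 // ltW.
rewrite /boost_gain; set v := p * _ in Z *.
have etad_v : eta * d <= v.
  have -> : eta * d = p * (eta * d / p) by rewrite [RHS]mulrC divfK // lt0r_neq0.
  by rewrite /v ler_pM2l // lerBrDl expR_ge1Dx.
have etad0 : 0 <= eta * d := mulr_ge0 (ltW eta0) d0.
rewrite ler_pdivlMr //.
have -> : eta / (1 + eta) * d ^+ 2 * (1 + v) = eta * d ^+ 2 * (1 + v) / (1 + eta) by ring.
rewrite ler_pdivrMr ?addr_gt0 //.
have : eta * d * d <= v * d by rewrite ler_wpM2r.
have : eta * v * (d * d) <= eta * v * d.
  by rewrite ler_wpM2l ?ler_piMl // mulr_ge0 ?(ltW eta0) ?(le_trans etad0).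
rewrite expr2; nra.
Qed.

Lemma expR_le_quadratic t : t <= 1 / 4 -> expR t <= 1 + t + t ^+ 2.
Proof.
move=> ht.
have hpos : 0 < 1 - t / 2 by lra.
have eh : expR (t / 2) <= (1 - t / 2)^-1.
  have := expR_ge1Dx (- (t / 2)); rewrite expRN => h.
  by rewrite -[expR (t / 2)]invrK lef_pV2 ?posrE ?invr_gt0 ?expR_gt0.
have -> : expR t = expR (t / 2) ^+ 2 by rewrite expr2 -expRD; congr expR; field.
apply: (le_trans (y := ((1 - t / 2)^-1) ^+ 2)).
  by rewrite ler_pXn2r ?nnegrE ?expR_ge0 ?invr_ge0 ?(ltW hpos).
rewrite exprVn -div1r ler_pdivrMr ?exprn_gt0 //.
have : 0 <= t ^+ 2 * (1 - 3 * t + t ^+ 2) by rewrite mulr_ge0 ?sqr_ge0 //; nra.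
have -> : (1 + t + t ^+ 2) * (1 - t / 2) ^+ 2 = 1 + t ^+ 2 * (1 - 3 * t + t ^+ 2) / 4.
  by field.
lra.
Qed.

Lemma boost_ratio_bounds p t : 0 <= p <= 1 -> `|t| <= 1 / 4 ->
  t - t ^+ 2 <= (expR t - 1) / (1 + p * (expR t - 1)) <= t + t ^+ 2.
Proof.
move=> hp; rewrite ler_norml => /andP[tlo thi].
have Z := boost_den_gt0 t hp; case/andP: hp => p0 p1.
have et := expR_gt0 t.
have eup := expR_le_quadratic thi.
have edn := @expR_le_quadratic (- t) ltac:(lra); rewrite sqrrN expRN in edn.
set u := expR t - 1 in Z *.
apply/andP; split.
  have -> : t - t ^+ 2 = (1 - (1 - t + t ^+ 2)) by ring.
  apply: (le_trans (y := u / (1 + u))).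
    have -> : u / (1 + u) = 1 - (expR t)^-1 by rewrite /u; field; exact: lt0r_neq0.
    by rewrite lerD2l lerN2 (le_trans edn) // addrAC.
  rewrite -subr_ge0.
  have -> : u / (1 + p * u) - u / (1 + u) = u ^+ 2 * (1 - p) / ((1 + p * u) * (1 + u)).
    by rewrite /u; field; rewrite !lt0r_neq0 //; lra.
  apply: divr_ge0; first by rewrite mulr_ge0 ?sqr_ge0 ?subr_ge0.
  by rewrite mulr_ge0 ?(ltW Z) //; rewrite /u; lra.
apply: (le_trans (y := u)); last by rewrite /u; lra.
rewrite -subr_ge0.
have -> : u - u / (1 + p * u) = p * u ^+ 2 / (1 + p * u) by field; exact: lt0r_neq0.
by rewrite divr_ge0 ?(ltW Z) // mulr_ge0 ?sqr_ge0.
Qed.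

Lemma boost_gain_ge_linear p t d : 0 <= p <= 1 -> `|t| <= 1 / 4 ->
  p * (d * t - `|d| * t ^+ 2) <= boost_gain p t d.
Proof.
move=> hp ht; have /andP[p0 _] := hp.
have /andP[lo up] := boost_ratio_bounds hp ht.
have -> : boost_gain p t d = p * (d * ((expR t - 1) / (1 + p * (expR t - 1)))).
  by rewrite /boost_gain; ring.
rewrite ler_wpM2l //.
have [d0|d0] := lerP 0 d.
  by rewrite ger0_norm // -mulrBr ler_wpM2l.
by rewrite ltr0_norm // mulNr opprK -mulrDr ler_wnM2l // ltW.
Qed.

Lemma boost_gain_adaptive_ge p d Rm y :
  0 <= p <= 1 -> 0 < Rm -> `|d| <= Rm -> `|y| <= 2 * Rm ->
  p * (d * (`|d| / (8 * Rm ^+ 2)) * y - `|d| ^+ 3 / (16 * Rm ^+ 2)) <=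
  boost_gain p (`|d| / (8 * Rm ^+ 2) * y) d.
Proof.
move=> hp Rm0 dRm yRm; have /andP[p0 _] := hp.
have k0 : 0 <= `|d| / (8 * Rm ^+ 2) by rewrite divr_ge0 // mulr_ge0 // sqr_ge0.
rewrite -[d * _ * y]mulrA; set t := `|d| / (8 * Rm ^+ 2) * y.
have t_le : `|t| <= `|d| / (4 * Rm).
  rewrite /t normrM (ger0_norm k0).
  have -> : `|d| / (4 * Rm) = `|d| / (8 * Rm ^+ 2) * (2 * Rm).
    by field; rewrite lt0r_neq0.
  by rewrite ler_wpM2l.
have t14 : `|t| <= 1 / 4.
  by apply: le_trans t_le _; rewrite ler_pdivrMr ?mulr_gt0 //; lra.
have t2 : t ^+ 2 <= `|d| ^+ 2 / (16 * Rm ^+ 2).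
  rewrite -real_normK ?num_real //.
  have -> : `|d| ^+ 2 / (16 * Rm ^+ 2) = (`|d| / (4 * Rm)) ^+ 2.
    by field; rewrite lt0r_neq0.
  by rewrite ler_pXn2r ?nnegrE ?divr_ge0 ?mulr_ge0 // ltW.
apply: le_trans _ (boost_gain_ge_linear d hp t14).
by rewrite ler_wpM2l // lerD2l lerN2 [`|d| ^+ 3]exprS -mulrA ler_wpM2l.
Qed.

Lemma continuous_boost_gain p d : 0 <= p <= 1 -> continuous (boost_gain p ^~ d).
Proof.
move=> hp c.
have cU : {for c, continuous (fun c => p * (expR c - 1))}.
  apply: continuousM; first exact: cst_continuous.
  by apply: continuousB; [exact: continuous_expR | exact: cst_continuous].
apply: (@continuousM _ _ (fun c => p * (expR c - 1) * d)
                         (fun c => (1 + p * (expR c - 1))^-1)).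
  by apply: continuousM => //; exact: cst_continuous.
apply: continuousV; first exact/lt0r_neq0/boost_den_gt0.
by apply: continuousD => //; exact: cst_continuous.
Qed.

End BoostGain.

Lemma sqr_sum_le_card (R : realFieldType) (I : finType) (A : {pred I}) (a : I -> R) :
  (\sum_(i in A) a i) ^+ 2 <= #|A|%:R * \sum_(i in A) a i ^+ 2.
Proof.
have -> : #|A|%:R * \sum_(i in A) a i ^+ 2 =
    \sum_(i in A) \sum_(j in A) (a i ^+ 2 + a j ^+ 2) / 2.
  under [RHS]eq_bigr => i _ do rewrite -mulr_suml big_split /= (sumr_const A (a i ^+ 2)).
  rewrite -mulr_suml big_split /= (sumr_const A (\sum_(i in A) a i ^+ 2)).
  by rewrite sumrMnl -mulr2n -[_ *+ 2]mulr_natr mulfK ?pnatr_eq0 // mulr_natl.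
rewrite expr2 big_distrlr /=; apply: ler_sum => i _; apply: ler_sum => j _.
rewrite ler_pdivlMr // -subr_ge0.
have -> : a i ^+ 2 + a j ^+ 2 - a i * a j * 2 = (a i - a j) ^+ 2 by ring.
exact: sqr_ge0.
Qed.

Section BoundedSupport.
Variables (R : realType) (mu : probability R R) (Rm : R).
Hypothesis Rm_ge0 : 0 <= Rm.
Hypothesis mu_supp : mu [set x : R | Rm < `|x|]%classic = 0%E.

Lemma ae_le_bound (Q : R -> Prop) :
  (forall x, `|x| <= Rm -> Q x) -> \forall x \ae mu, Q x.
Proof.
move=> hQ; exists [set x : R | Rm < `|x|]%classic; split => //.
  have : measurable_fun setT (fun x : R => Rm < `|x|).
    by apply: measurable_realfun.measurable_fun_ltr => //; exact: measurableT_comp.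
  move=> /(_ measurableT [set true]%classic I); rewrite setTI.
  by congr measurable; apply/seteqP; split => x /=.
by move=> x /= nQ; rewrite ltNge; apply/negP => hx; exact: nQ (hQ x hx).
Qed.

Lemma integrable_id_bounded : mu.-integrable setT (EFin \o (fun x : R => x)).
Proof.
apply/integrableP; split; first exact/measurable_realfun.measurable_EFinP.
apply: (le_lt_trans (integral_le_bound (Rm%:E) _ _ _ _)) => //.
- exact/measurable_realfun.measurable_EFinP.
- by apply: ae_le_bound => x hx _ /=; rewrite lee_fin.
- apply: lte_mul_pinfty => //.
  exact: (le_lt_trans (probability_le1 mu measurableT) (ltry 1)).
Qed.

Lemma integrable_affine al be :
  mu.-integrable setT (EFin \o (fun x : R => al * x + be)).
Proof.
have int_cst : mu.-integrable setT (EFin \o cst be).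
  exact: finite_measure_integrable_cst.
exact: (integrableD measurableT (integrableZl measurableT al integrable_id_bounded) int_cst).
Qed.

Lemma Rintegral_affine m al be : (\int[mu]_x (x%:E) = m%:E)%E ->
  Rintegral mu setT (fun x => al * x + be) = al * m + be.
Proof.
move=> hmean; have mu1 : mu setT = 1%E := probability_setT mu.
rewrite RintegralD //.
- rewrite RintegralZl //; last exact: integrable_id_bounded.
  by rewrite Rintegral_cst // /Rintegral /= hmean /= mu1 /= mulr1.
- exact: (integrableZl measurableT al integrable_id_bounded).
- exact: finite_measure_integrable_cst.
Qed.

Lemma Rintegral_ge_affine m (F : R -> R) al be B :
  (\int[mu]_x (x%:E) = m%:E)%E ->
  measurable_fun setT F -> (forall x, `|F x| <= B) ->
  (forall x, `|x| <= Rm -> al * x + be <= F x) ->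
  al * m + be <= Rintegral mu setT F.
Proof.
move=> hmean mF bF lowF.
have int_F : mu.-integrable setT (EFin \o F).
  have int_cst : mu.-integrable setT (EFin \o cst B).
    exact: finite_measure_integrable_cst.
  apply: (le_integrable _ _ _ int_cst) => //.
  - exact/measurable_realfun.measurable_EFinP.
  - by move=> x _ /=; rewrite lee_fin (le_trans (bF x)) // ler_norm.
have mL : measurable_fun setT (fun x : R => al * x + be).
  by apply/measurable_realfun.measurable_EFinP; case/integrableP: (integrable_affine al be).
rewrite -(Rintegral_affine al be hmean) -subr_ge0 -RintegralB ?integrable_affine //.
set G := fun x : R => F x - Order.min (F x) (al * x + be).
have mG : measurable_fun setT G.
  apply: measurable_realfun.measurable_funB => //.
  exact: measurable_realfun.measurable_minr.
have -> : Rintegral mu setT (fun x => F x - (al * x + be)) = Rintegral mu setT G.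
  congr fine; apply: ae_eq_integral => //.
  - apply/measurable_realfun.measurable_EFinP.
    exact: measurable_realfun.measurable_funB.
  - exact/measurable_realfun.measurable_EFinP.
  - apply: ae_le_bound => x hx _; rewrite /G.
    by rewrite (min_idPr (lowF x hx)).
by apply/fine_ge0/integral_ge0 => x _; rewrite lee_fin /G subr_ge0 ge_min lexx.
Qed.

Lemma mean_le_bound m : (\int[mu]_x (x%:E) = m%:E)%E -> m <= Rm.
Proof.
move=> hmean.
have := @Rintegral_ge_affine m (cst Rm) 1 0 `|Rm| hmean (measurable_cst Rm) (fun=> lexx _).
have mu1 : mu setT = 1%E := probability_setT mu.
rewrite Rintegral_cst //= mu1 mul1r addr0 mulr1; apply=> x hx.
by rewrite mul1r addr0 (le_trans (ler_norm x)).
Qed.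

End BoundedSupport.

(* Where an index [s] or [s0] is not otherwise needed, it only witnesses that
   ['I_K] is inhabited, so that the softmax weights sum to 1. *)
Section Softmax.
Variables (R : realType) (K : nat).
Implicit Types (th r : 'I_K -> R) (s : 'I_K).

Lemma sumexp_gt0 th s : 0 < \sum_(a < K) expR (th a).
Proof.
rewrite (bigD1 s) //= ltr_pwDl ?expR_gt0 //.
by apply: sumr_ge0 => i _; exact: expR_ge0.
Qed.

Lemma softmax_gt0 th s : 0 < softmax th s.
Proof. by rewrite /softmax divr_gt0 ?expR_gt0 ?(sumexp_gt0 th s). Qed.

Lemma sum_softmax th s : \sum_(a < K) softmax th a = 1.
Proof. by rewrite /softmax -mulr_suml mulfV // lt0r_neq0 ?(sumexp_gt0 th s). Qed.

Lemma softmax_ge0_le1 th s : 0 <= softmax th s <= 1.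
Proof.
rewrite ltW ?softmax_gt0 //= -(sum_softmax th s) (bigD1 s) //= lerDl.
by apply: sumr_ge0 => i _; exact/ltW/softmax_gt0.
Qed.

Lemma softmax_avgB th s (F : 'I_K -> R) c :
  \sum_(a < K) softmax th a * F a - c = \sum_(a < K) softmax th a * (F a - c).
Proof.
under [RHS]eq_bigr do rewrite mulrBr.
by rewrite sumrB -mulr_suml (sum_softmax th s) mul1r.
Qed.

Lemma pr_centered th r s : \sum_(a < K) softmax th a * (r a - pr th r) = 0.
Proof. by rewrite -(softmax_avgB th s) subrr. Qed.

Lemma pr_le th r s hi : (forall a, r a <= hi) -> pr th r <= hi.
Proof.
move=> r_le; rewrite -subr_le0 /pr (softmax_avgB th s) sumr_le0 // => a _.
by rewrite mulr_ge0_le0 ?subr_le0 // ltW ?softmax_gt0.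
Qed.

Lemma pr_ge th r s lo : (forall a, lo <= r a) -> lo <= pr th r.
Proof.
move=> r_ge; rewrite -subr_ge0 /pr (softmax_avgB th s) sumr_ge0 // => a _.
by rewrite mulr_ge0 ?subr_ge0 // ltW ?softmax_gt0.
Qed.

Lemma pr_ge0_le1 th r s : (forall a, 0 <= r a <= 1) -> 0 <= pr th r <= 1.
Proof.
move=> hr; rewrite (pr_ge th s) ?(pr_le th s) // => a; by case/andP: (hr a).
Qed.

Section Boost.
Variables (th th' : 'I_K -> R) (s : 'I_K) (c k : R).
Hypothesis th'E : forall a, th' a = th a + k + (if a == s then c else 0).

Lemma sumexp_boost (f : 'I_K -> R) :
  \sum_(a < K) expR (th' a) * f a =
  expR k * (\sum_(a < K) expR (th a) * f a + expR (th s) * (expR c - 1) * f s).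
Proof.
rewrite (bigD1 s) //= [in RHS](bigD1 s) //= th'E eqxx !expRD.
under eq_bigr => a /negbTE nas do rewrite th'E nas addr0 expRD.
under eq_bigr do rewrite mulrAC.
by rewrite -mulr_suml; ring.
Qed.

Lemma pr_boost r :
  pr th' r = pr th r + boost_gain (softmax th s) c (r s - pr th r).
Proof.
have prE th0 : pr th0 r = (\sum_(a < K) expR (th0 a) * r a) / \sum_(a < K) expR (th0 a).
  by rewrite /pr /softmax mulr_suml; apply: eq_bigr => a _; rewrite mulrAC.
have sumE th0 : \sum_(a < K) expR (th0 a) = \sum_(a < K) expR (th0 a) * 1.
  by under [RHS]eq_bigr do rewrite mulr1.
have S0 := sumexp_gt0 th s.
have Z := boost_den_gt0 c (softmax_ge0_le1 th s).
rewrite !prE (sumE th') !sumexp_boost -!sumE /boost_gain /softmax in Z *.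
move: Z; set S := \sum_(a < K) _; set A := \sum_(a < K) _ => Z.
field; rewrite !lt0r_neq0 ?expR_gt0 //.
have -> : S + expR (th s) * (expR c - 1) = S * (1 + expR (th s) / S * (expR c - 1)).
  by field; rewrite lt0r_neq0.
exact: mulr_gt0.
Qed.
End Boost.

Lemma upd_iw_baselineE th r eta s (y : 'I_K -> R) a :
  upd th eta (iw th s y) (baseline th r s) a =
  th a + eta * pr th r + (if a == s then eta * (y s - pr th r) / softmax th s else 0).
Proof.
have p0 := lt0r_neq0 (softmax_gt0 th s).
rewrite /upd /iw /baseline /ind eq_sym.
by case: (eqVneq a s) => [->|_] /=; [field | rewrite !mul0r; ring].
Qed.

Lemma pr_upd_iw_baseline th r eta s (y : 'I_K -> R) :
  pr (upd th eta (iw th s y) (baseline th r s)) r =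
  pr th r + boost_gain (softmax th s) (eta * (y s - pr th r) / softmax th s) (r s - pr th r).
Proof. by apply: pr_boost => a; rewrite upd_iw_baselineE. Qed.

Lemma pr_upd_mean_ge th r eta s : 0 <= eta -> pr th r <= pr (upd_mean th r eta s) r.
Proof.
move=> eta0; rewrite pr_upd_iw_baseline lerDl boost_gain_ge0 ?softmax_ge0_le1 //.
rewrite mulrAC -(mulrA eta) -expr2 divr_ge0 ?(mulr_ge0 eta0 (sqr_ge0 _)) //.
exact/ltW/softmax_gt0.
Qed.

Lemma expected_pr_upd_mean_ge th r eta astar :
  0 < eta -> (forall a, 0 <= r a <= 1) -> (forall a, r a <= r astar) ->
  eta / (1 + eta) * softmax th astar * (r astar - pr th r) ^+ 2 <=
  \sum_(s < K) softmax th s * pr (upd_mean th r eta s) r - pr th r.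
Proof.
move=> eta0 hr r_le; rewrite (softmax_avgB th astar) (bigD1 astar) //=.
apply: ler_wpDr.
  apply: sumr_ge0 => s _; rewrite mulr_ge0 ?subr_ge0 ?pr_upd_mean_ge ?ltW //.
  exact: softmax_gt0.
rewrite mulrAC mulrC ler_wpM2l ?(ltW (softmax_gt0 th astar)) //.
have /andP[P0 P1] := pr_ge0_le1 th astar hr.
have /andP[ra0 ra1] := hr astar.
rewrite /upd_mean pr_upd_iw_baseline addrAC subrr add0r boost_gain_ge_scaled //.
  by rewrite softmax_gt0; case/andP: (softmax_ge0_le1 th astar).
by rewrite subr_ge0 (pr_le th astar) //=; lra.
Qed.

End Softmax.

Section SampledReward.
Variables (R : realType) (K : nat).
Implicit Types (th r : 'I_K -> R) (s : 'I_K).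

Lemma pr_upd_sampled th r Rm s x : Rm != 0 ->
  pr (upd_sampled th r Rm s x) r = pr th r +
    boost_gain (softmax th s) (`|r s - pr th r| / (8 * Rm ^+ 2) * (x - pr th r))
      (r s - pr th r).
Proof.
move=> Rm0; rewrite /upd_sampled pr_upd_iw_baseline /xvec eqxx /eta_adapt.
have p0 := lt0r_neq0 (softmax_gt0 th s).
by congr (_ + boost_gain _ _ _); field; rewrite Rm0.
Qed.

Lemma Rintegral_pr_upd_sampled_ge th r Rm s (mu : probability R R) :
  0 < Rm -> mu [set x : R | Rm < `|x|]%classic = 0%E ->
  (\int[mu]_x (x%:E) = (r s)%:E)%E ->
  (forall a, 0 <= r a <= 1) -> (forall a, r a <= Rm) ->
  pr th r + softmax th s * `|r s - pr th r| ^+ 3 / (16 * Rm ^+ 2) <=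
  Rintegral mu setT (fun x => pr (upd_sampled th r Rm s x) r).
Proof.
move=> Rm0 mu_supp mu_mean hr r_le.
have FE := pr_upd_sampled th r s ^~ (lt0r_neq0 Rm0).
set P := pr th r in FE *; set p := softmax th s in FE *.
set d := r s - P in FE *; set k := `|d| / (8 * Rm ^+ 2) in FE *.
have hp : 0 <= p <= 1 := softmax_ge0_le1 th s.
have P0 : 0 <= P by case/andP: (pr_ge0_le1 th s hr).
have PRm : P <= Rm := pr_le th s r_le.
have /andP[rs0 _] := hr s.
have rsRm := r_le s.
have dRm : `|d| <= Rm by rewrite ler_norml /d; apply/andP; split; lra.
(* the affine minorant of [boost_gain_adaptive_ge], evaluated at the mean [r s] *)
have -> : P + p * `|d| ^+ 3 / (16 * Rm ^+ 2) =
    p * d * k * r s + (P - p * d * k * P - p * (`|d| ^+ 3 / (16 * Rm ^+ 2))).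
  rewrite (_ : r s = d + P); last by rewrite subrK.
  rewrite /k exprS real_normK ?num_real //.
  by field; rewrite lt0r_neq0.
apply: (@Rintegral_ge_affine _ _ _ (ltW Rm0) mu_supp _ _ _ _ 1 mu_mean).
- rewrite (funext FE); apply: measurable_realfun.continuous_measurable_fun => x.
  apply: (@continuousD _ _ _ (cst P) (fun x => boost_gain p (k * (x - P)) d)).
    exact: cst_continuous.
  have lin : {for x, continuous (fun x : R => k * (x - P))}.
    apply: continuousM; first exact: cst_continuous.
    by apply: continuousB; [exact: cvg_id | exact: cst_continuous].
  exact: (continuous_comp lin (@continuous_boost_gain _ p d hp (k * (x - P)))).
- move=> x; have /andP[F0 F1] := pr_ge0_le1 (upd_sampled th r Rm s x) s hr.
  by rewrite ger0_norm.
- move=> x hx; rewrite FE.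
  have -> : p * d * k * x + (P - p * d * k * P - p * (`|d| ^+ 3 / (16 * Rm ^+ 2))) =
      P + p * (d * k * (x - P) - `|d| ^+ 3 / (16 * Rm ^+ 2)) by ring.
  rewrite lerD2l boost_gain_adaptive_ge //.
  by have := ler_normB x P; rewrite (ger0_norm P0); lra.
Qed.

Lemma expected_pr_upd_sampled_ge th r Rm (Rdist : 'I_K -> probability R R) s0 :
  0 < Rm -> (forall a, Rdist a [set x : R | Rm < `|x|]%classic = 0%E) ->
  (forall a, \int[Rdist a]_x (x%:E) = (r a)%:E)%E -> (forall a, 0 <= r a <= 1) ->
  1 / (16 * Rm ^+ 2) * \sum_(i < K) softmax th i ^+ 2 * `|r i - pr th r| ^+ 3 <=
  \sum_(s < K) softmax th s *
    Rintegral (Rdist s) setT (fun x => pr (upd_sampled th r Rm s x) r) - pr th r.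
Proof.
move=> Rm0 supp mean hr.
have r_le a : r a <= Rm := mean_le_bound (ltW Rm0) (supp a) (mean a).
rewrite (softmax_avgB th s0) mulr_sumr; apply: ler_sum => s _.
have := Rintegral_pr_upd_sampled_ge th Rm0 (supp s) (mean s) hr r_le.
rewrite -lerBrDl => gain.
have -> : 1 / (16 * Rm ^+ 2) * (softmax th s ^+ 2 * `|r s - pr th r| ^+ 3) =
    softmax th s * (softmax th s * `|r s - pr th r| ^+ 3 / (16 * Rm ^+ 2)) by ring.
by rewrite ler_wpM2l ?(ltW (softmax_gt0 th s)).
Qed.

End SampledReward.

Section Gap.
Variables (R : realType) (K : nat) (r : 'I_K -> R) (astar : 'I_K) (th : 'I_K -> R).
Hypothesis r_le : forall a, r a <= r astar.

Lemma le_sub_gap i : i != astar -> r i <= r astar - gap r astar.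
Proof.
move=> ia; rewrite /gap opprB addrC subrK.
exact: (le_bigmax_cond (P := fun a => a != astar) 0 r ia).
Qed.

Lemma gap_ge0 : 0 <= r astar -> 0 <= gap r astar.
Proof. by move=> ra0; rewrite subr_ge0; apply/bigmax_leP. Qed.

Lemma dev_astar_le_others :
  softmax th astar * (r astar - pr th r) <=
  \sum_(i < K | i != astar) softmax th i * `|r i - pr th r|.
Proof.
have := pr_centered th r astar; rewrite (bigD1 astar) //= => /eqP; rewrite addr_eq0.
move=> /eqP ->; rewrite -sumrN; apply: ler_sum => i _.
by rewrite -mulrN ler_wpM2l ?ler_normr ?lexx ?orbT // ltW ?softmax_gt0.
Qed.

Lemma sum_others_cubes_ge : (2 <= K)%N -> r astar - pr th r <= gap r astar ->
  (gap r astar - (r astar - pr th r)) *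
    (softmax th astar * (r astar - pr th r)) ^+ 2 / (K%:R - 1) <=
  \sum_(i < K | i != astar) softmax th i ^+ 2 * `|r i - pr th r| ^+ 3.
Proof.
move=> K2 dg; set P := pr th r; set g := gap r astar; set d := r astar - P.
set w := fun i => softmax th i * `|r i - P|.
have K1 : 0 < K%:R - 1 :> R by rewrite subr_gt0 ltr1n.
have d0 : 0 <= d by rewrite subr_ge0 (pr_le th astar).
apply: (le_trans (y := (g - d) * \sum_(i < K | i != astar) w i ^+ 2)).
  rewrite -mulrA ler_wpM2l ?subr_ge0 // ler_pdivrMr // [X in _ <= X]mulrC.
  have := sqr_sum_le_card (predC1 astar) w.
  rewrite cardC1 card_ord -subn1 natrB ?(ltnW K2) //; apply: le_trans.
  have pd0 : 0 <= softmax th astar * d := mulr_ge0 (ltW (softmax_gt0 th astar)) d0.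
  rewrite ler_pXn2r ?nnegrE //; first exact: dev_astar_le_others.
  exact: le_trans pd0 dev_astar_le_others.
rewrite mulr_sumr; apply: ler_sum => i ia.
rewrite /w exprMn mulrCA ler_wpM2l ?sqr_ge0 // exprS ler_wpM2r ?exprn_ge0 //.
have := le_sub_gap ia; rewrite -/g /d => rig.
by rewrite ler_normr; apply/orP; right; rewrite /d; lra.
Qed.

Lemma gap_le_sum_cubes : (2 <= K)%N -> 0 <= r astar ->
  gap r astar / (K%:R - 1) * softmax th astar ^+ 2 * (r astar - pr th r) ^+ 2 <=
  \sum_(i < K) softmax th i ^+ 2 * `|r i - pr th r| ^+ 3.
Proof.
move=> K2 ra0; have g0 := gap_ge0 ra0.
have K2R : 2%:R <= K%:R :> R by rewrite ler_nat.
have K1 : 1 <= K%:R - 1 :> R by lra.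
have d0 : 0 <= r astar - pr th r by rewrite subr_ge0 (pr_le th astar).
rewrite (bigD1 astar) //= ger0_norm //.
set g := gap r astar; set d := r astar - pr th r; set p := softmax th astar.
have q0 : 0 <= p ^+ 2 * d ^+ 2 by rewrite mulr_ge0 ?sqr_ge0.
have gK : g / (K%:R - 1) <= g by rewrite ler_pdivrMr ?(lt_le_trans ltr01) // ler_peMr.
have [gd|dg] := lerP g d.
  rewrite -mulrA ler_wpDr ?sumr_ge0 // => [i _|]; first by rewrite mulr_ge0 ?sqr_ge0.
  have -> : p ^+ 2 * d ^+ 3 = d * (p ^+ 2 * d ^+ 2) by ring.
  by rewrite ler_wpM2r // (le_trans gK gd).
have := sum_others_cubes_ge K2 (ltW dg); rewrite -/g -/d -/p => others.
apply: le_trans (lerD (lexx (p ^+ 2 * d ^+ 3)) others).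
rewrite -subr_ge0.
have -> : p ^+ 2 * d ^+ 3 + (g - d) * (p * d) ^+ 2 / (K%:R - 1) -
    g / (K%:R - 1) * p ^+ 2 * d ^+ 2 = d * (p ^+ 2 * d ^+ 2) * (1 - 1 / (K%:R - 1)).
  by field; rewrite lt0r_neq0 // (lt_le_trans ltr01).
by rewrite mulr_ge0 ?(mulr_ge0 d0 q0) // subr_ge0 ler_pdivrMr ?mul1r // (lt_le_trans ltr01).
Qed.

End Gap.

Theorem lemma1 (R : realType) (K : nat) (hK : (2 <= K)%N)
  (r : 'I_K -> R) (hr : forall a, 0 <= r a <= 1)
  (astar : 'I_K) (hastar : forall a, r a <= r astar)
  (Rmax : R) (hRmax : 0 < Rmax)
  (Rdist : 'I_K -> probability R R)
  (hsupp : forall a, Rdist a [set x : R | Rmax < `|x|]%classic = 0%E)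
  (hmean : forall a, (\int[Rdist a]_x (x%:E) = (r a)%:E)%E)
  (th : 'I_K -> R) (eta : R) (heta : 0 < eta) :
  (* part (1): true mean reward, constant step size eta *)
  ((forall s : 'I_K, pr (upd_mean th r eta s) r - pr th r >= 0) /\
   \sum_(s < K) softmax th s * pr (upd_mean th r eta s) r - pr th r
     >= eta / (1 + eta) * softmax th astar * (r astar - pr th r) ^+ 2)
  /\
  (* part (2): sampled reward, adaptive step size *)
  (let E := \sum_(s < K) softmax th s *
               Rintegral (Rdist s) setT (fun x => pr (upd_sampled th r Rmax s x) r) in
   E - pr th r >= 1 / (16 * Rmax ^+ 2) *
       \sum_(i < K) softmax th i ^+ 2 * `|r i - pr th r| ^+ 3 /\
   1 / (16 * Rmax ^+ 2) * \sum_(i < K) softmax th i ^+ 2 * `|r i - pr th r| ^+ 3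
     >= 1 / (16 * Rmax ^+ 2) * (gap r astar / (K%:R - 1)) *
        softmax th astar ^+ 2 * (r astar - pr th r) ^+ 2).
Proof.
have ra0 : 0 <= r astar by case/andP: (hr astar).
split; first split.
- by move=> s; rewrite subr_ge0 pr_upd_mean_ge // ltW.
- exact: expected_pr_upd_mean_ge.
split; first exact: expected_pr_upd_sampled_ge.
set c := 1 / (16 * Rmax ^+ 2); rewrite -2!(mulrA c) ler_wpM2l ?gap_le_sum_cubes //.
by rewrite divr_ge0 // mulr_ge0 // sqr_ge0.
Qed.
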